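(* The functor $\mathsf{Eq} : \int_{\mathsf{Set}} (\mathsf{id} \times \mathsf{id}) \Rightarrow \mathsf{Set}$ is continuous relative to the forgetful functor $\int_{\mathsf{Set}} (\mathsf{id} \times \mathsf{id}) \Rightarrow \mathsf{Set}$.
   Context: Work in Martin-Löf type theory with function extensionality; $\mathsf{Set}$ is the universe/category of sets (types satisfying UIP). The category $\int_{\mathsf{Set}}(\mathsf{id}\times\mathsf{id})$ has objects triples $(X,x,y)$ with $X : \mathsf{Set}$ and $x,y : X$; a morphism $(X,x,y) \to (X',x',y')$ is a triple $(f,p_x,p_y)$ with $f : X \to X'$, $p_x : f(x) = x'$, $p_y : f(y) = y'$. $\mathsf{Eq}$ is defined on objects by $\mathsf{Eq}(X,x,y) = (x =_X y)$ and on morphisms by sending $q : x = y$ to $p_x^{-1} \cdot \mathsf{ap}_f(q) \cdot p_y$ (path reversal, application of $f$ to paths, and concatenation). Relative continuity: for $U : \mathcal{D} \Rightarrow \mathcal{D}_0$ with $\mathcal{D}_0$ complete, a cone over a small diagram in $\mathcal{D}$ is a $U$-limit cone if $U$ maps it to a limit cone; a functor $\mathcal{D} \Rightarrow \mathsf{Set}$ is continuous relative to $U$ if it maps $U$-limit cones to limit cones in $\mathsf{Set}$. *)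

(* "Set" = types satisfying UIP. *)
Definition isSet (X : Type) : Prop := forall (a b : X) (p q : a = b), p = q.

Record Cat := {
  ob : Type;
  hom : ob -> ob -> Type;
  idm : forall a, hom a a;
  cmp : forall a b c, hom b c -> hom a b -> hom a c;
  cmp_idl : forall a b (f : hom a b), cmp a b b (idm b) f = f;
  cmp_idr : forall a b (f : hom a b), cmp a a b f (idm a) = f;
  cmp_assoc : forall a b c d (h : hom c d) (g : hom b c) (f : hom a b),
      cmp a b d (cmp b c d h g) f = cmp a c d h (cmp a b c g f)
}.
Arguments idm {c} a : rename.
Arguments cmp {c a b c0} _ _ : rename.

(* Objects of \int_Set (id x id): triples (X, x, y). *)
Record BiObj := {
  car : Type;
  car_set : isSet car;
  ptx : car;
  pty : car
}.

Record BiHom (A B : BiObj) := {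
  fn : car A -> car B;
  hx : fn (ptx A) = ptx B;
  hy : fn (pty A) = pty B
}.
Arguments fn {A B} _ _.
Arguments hx {A B} _.
Arguments hy {A B} _.

Definition bid (A : BiObj) : BiHom A A :=
  {| fn := fun a => a; hx := eq_refl; hy := eq_refl |}.

Definition bcomp {A B C : BiObj} (g : BiHom B C) (f : BiHom A B) : BiHom A C :=
  {| fn := fun a => fn g (fn f a);
     hx := eq_trans (f_equal (fn g) (hx f)) (hx g);
     hy := eq_trans (f_equal (fn g) (hy f)) (hy g) |}.

Record Diagram (J : Cat) := {
  dob : ob J -> BiObj;
  dmap : forall a b, hom J a b -> BiHom (dob a) (dob b);
  dmap_id : forall a, dmap a a (idm a) = bid (dob a);
  dmap_comp : forall a b c (g : hom J b c) (f : hom J a b),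
      dmap a c (cmp g f) = bcomp (dmap b c g) (dmap a b f)
}.
Arguments dob {J} _ _.
Arguments dmap {J} _ {a b} _.

Definition isCone {J : Cat} (D : Diagram J) (c : BiObj)
    (l : forall j, BiHom c (dob D j)) : Prop :=
  forall i j (u : hom J i j), bcomp (dmap D u) (l i) = l j.

Definition isLimitSet {J : Cat} (A : ob J -> Type)
    (m : forall i j, hom J i j -> A i -> A j)
    (L : Type) (l : forall j, L -> A j) : Prop :=
  (forall i j (u : hom J i j) (x : L), m i j u (l i x) = l j x) /\
  (forall (Y : Type), isSet Y ->
     forall (mu : forall j, Y -> A j),
       (forall i j (u : hom J i j) (y : Y), m i j u (mu i y) = mu j y) ->
       exists! h : Y -> L, forall j (y : Y), l j (h y) = mu j y).

Definition EqOb (A : BiObj) : Type := ptx A = pty A.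

Definition EqMap {A B : BiObj} (f : BiHom A B) (q : EqOb A) : EqOb B :=
  eq_trans (eq_sym (hx f)) (eq_trans (f_equal (fn f) q) (hy f)).

(* A functor G : \int_Set (id x id) => Set (given by its object and
   morphism parts) is continuous relative to the forgetful functor U
   (U (X,x,y) = X, U (f,p_x,p_y) = f) if it maps U-limit cones over
   small diagrams to limit cones in Set. *)
Definition relContinuousU (G0 : BiObj -> Type)
    (G1 : forall A B : BiObj, BiHom A B -> G0 A -> G0 B) : Prop :=
  forall (J : Cat) (D : Diagram J) (c : BiObj) (l : forall j, BiHom c (dob D j)),
    isCone D c l ->
    isLimitSet (fun j => car (dob D j)) (fun i j u => fn (dmap D u))
               (car c) (fun j => fn (l j)) ->
    isLimitSet (fun j => G0 (dob D j)) (fun i j u => G1 _ _ (dmap D u))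
               (G0 c) (fun j => G1 _ _ (l j)).

From Stdlib Require Import FunctionalExtensionality Eqdep_dec.

(* Since every carrier is a set, each [EqOb A] is a proposition, so the cone
   condition and uniqueness of factorizations are automatic.  For existence,
   a compatible family [mu j y : x_j = y_j] says that the two points [x] and
   [y] of the vertex have equal images under every leg; as the underlying
   cone is a limit in Set, the legs are jointly injective, hence [x = y]. *)

Lemma unit_isSet : isSet unit.
Proof. intros a b p q. apply UIP_dec. intros [] []. left; reflexivity. Qed.

Lemma EqOb_irrelevant (A : BiObj) (p q : EqOb A) : p = q.
Proof. apply car_set. Qed.

Lemma isLimitSet_legs_jointly_injective {J : Cat} (A : ob J -> Type)
    (m : forall i j, hom J i j -> A i -> A j) (L : Type) (l : forall j, L -> A j) :
  isLimitSet A m L l ->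
  forall a b : L, (forall j, l j a = l j b) -> a = b.
Proof.
  intros [Hcone Huniv] a b Hab.
  destruct (Huniv unit unit_isSet (fun j _ => l j a)) as [h [_ Hh_unique]].
  { intros i j u _. apply Hcone. }
  assert (Ha : h = fun _ => a) by (apply Hh_unique; reflexivity).
  assert (Hb : h = fun _ => b) by (apply Hh_unique; intros j _; symmetry; apply Hab).
  exact (f_equal (fun f => f tt) (eq_trans (eq_sym Ha) Hb)).
Qed.

Theorem mainTheorem5 : relContinuousU EqOb (fun A B f => @EqMap A B f).
Proof.
  intros J D c l _ Hlim. split.
  - intros i j u q. apply EqOb_irrelevant.
  - intros Y _ mu _.
    assert (h : Y -> EqOb c).
    { intros y. apply (isLimitSet_legs_jointly_injective _ _ _ _ Hlim).
      intros j. exact (eq_trans (hx (l j)) (eq_trans (mu j y) (eq_sym (hy (l j))))). }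
    exists h. split.
    + intros j y. apply EqOb_irrelevant.
    + intros h' _. apply functional_extensionality. intros y. apply EqOb_irrelevant.
Qed.
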